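(* Let $(\Delta,\mathfrak o,m,q)$ be a quantized Brauer graph. Then there exist a finite abelian group $G$ and a Brauer weighting $W:\mathcal Z_\Delta\to G$ of $(\Delta,\mathfrak o,m,q)$ such that the graph $\Delta_W$ of the quantized Brauer covering graph $(\Delta_W,\mathfrak o_W,m_W,q_W)$ contains no loops.
   Context: Brauer graphs. A Brauer graph $(\Delta,\mathfrak o,m)$ is a finite connected graph $\Delta$ (loops and multiple edges allowed) with vertex set $\Delta_0$, edge set $\Delta_1$ and at least one edge, together with a multiplicity function $m:\Delta_0\to\mathbb Z_{\ge 1}$ and, for each vertex $\mu$, a cyclic ordering $\mathfrak o$ of the edges incident with $\mu$. A loop at $\mu$ occurs twice in the cyclic ordering at $\mu$; its two occurrences are regarded as two distinct elements of $\Delta_1$ (each with its own successor). Edge $j$ is the successor of edge $i$ at $\mu$ if $j$ immediately follows $i$ in the cyclic ordering at $\mu$. The valency $\operatorname{val}(\mu)$ is the number of edges incident with $\mu$, loops counted twice; if $\operatorname{val}(\mu)=1$ the unique edge at $\mu$ is its own successor. An edge $i$ is truncated at its endpoint $\mu$ if $\operatorname{val}(\mu)=1$ and $m(\mu)=1$. Fix a field $K$. A quantized Brauer graph $(\Delta,\mathfrak o,m,q)$ is a Brauer graph with a function $q:\mathcal X_\Delta\to K\setminus\{0\}$, $(i,\mu)\mapsto q_{i,\mu}$, where $\mathcal X_\Delta$ is the set of pairs $(i,\mu)$ with $\mu$ an endpoint of $i$ and $i$ not truncated at either of its endpoints. Successor weightings. Let $G$ be a finite abelian group. For $\mu\in\Delta_0$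 let $\mathcal Z_\mu$ be the set of pairs $(i,j)$ of edges with $j$ the successor of $i$ at $\mu$, and $\mathcal Z_\Delta=\bigsqcup_{\mu\in\Delta_0}\mathcal Z_\mu$ (disjoint union). A successor weighting is a function $W:\mathcal Z_\Delta\to G$. Put $\omega_\mu=\prod_{(i,j)\in\mathcal Z_\mu}W(i,j)$, let $\operatorname{ord}(\mu)$ be the order of $\omega_\mu$ in $G$, and $H_\mu=\langle\omega_\mu\rangle$. $W$ is a Brauer weighting if $\operatorname{ord}(\mu)$ divides $m(\mu)$ for all $\mu\in\Delta_0$. For each $\mu$, $\sim$ is the equivalence relation on the set of pairs $(i,H_\mu g)$ ($i$ incident with $\mu$, $g\in G$) generated by $(i,H_\mu g)\sim(j,H_\mu gW(i,j))$ whenever $j$ is the successor of $i$ at $\mu$; the class of $(i,H_\mu g)$ is $[i,H_\mu g]$, and $\mathcal D_\mu$ is the set of classes. Brauer covering graph. The graph $\Delta_W$ has vertices $\mu_d$ ($\mu\in\Delta_0$, $d\in\mathcal D_\mu$) and edges $i_g$ ($i\in\Delta_1$, $g\in G$). If $i$ has endpoints $\mu$ and $\nu$, then $i_g$ has endpoints $\mu_{[i,H_\mu g]}$ and $\nu_{[i,H_\nu g]}$; if $i$ is a loop at $\mu$ with its two occurrences $i,\hat i$, then $i_g$ has endpoints $\mu_{[i,H_\mu g]}$ and $\mu_{[\hat i,H_\mu g]}$. The cyclic ordering $\mathfrak o_W$ is defined by: if $j$ is the successor of $i$ at $\mu$, then $j_{gW(i,j)}$ is the successor of $i_g$ at $\mu_{[i,H_\mu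 g]}$. For a Brauer weighting, $m_W(\mu_d)=m(\mu)/\operatorname{ord}(\mu)$; $(\Delta_W,\mathfrak o_W,m_W)$ is the Brauer covering graph. Given a quantizing function $q$ on $\Delta$, $q_W(i_g,\mu_d)=q_{i,\mu}$, and $(\Delta_W,\mathfrak o_W,m_W,q_W)$ is the quantized Brauer covering graph. *)

From HB Require Import structures.
From mathcomp Require Import all_boot all_order all_algebra all_fingroup.
Set Implicit Arguments. Unset Strict Implicit. Unset Printing Implicit Defensive.

(* Brauer graphs, half-edge (dart) encoding.                               *)
(*  V     : vertices Delta_0                                               *)
(*  H     : half-edges = occurrences of edges at their endpoints; a loop   *)
(*          contributes two half-edges (its two occurrences), a non-loop   *)
(*          edge contributes one half-edge at each endpoint.               *)
(*  iota  : fixed-point-free involution pairing the two half-edges of an   *)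
(*          edge (so edges = iota-orbits).                                 *)
(*  vert  : the endpoint at which a half-edge sits.                        *)
(*  sigma : successor in the cyclic ordering: sigma h is the successor of  *)
(*          h at vert h; sigma restricted to each vertex is one cycle.     *)
(* The successor pairs Z_mu are the pairs (h, sigma h) with vert h = mu,   *)
(* so Z_Delta is in bijection with H and a successor weighting is H -> G.  *)

Definition adjacent (V H : finType) (iota : H -> H) (vert : H -> V) : rel V :=
  fun mu nu => [exists h, (vert h == mu) && (vert (iota h) == nu)].

Definition brauer_graph (V H : finType) (iota sigma : H -> H) (vert : H -> V)
  (m : V -> nat) : Prop :=
  (forall h, iota (iota h) = h) /\
  (forall h, iota h != h) /\
  injective sigma /\
  (forall h, vert (sigma h) = vert h) /\
  (forall h h', vert h = vert h' -> fconnect sigma h h') /\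
  (forall mu, 0 < m mu) /\
  (forall mu nu, connect (adjacent iota vert) mu nu) /\
  0 < #|H|.

(* valency of a vertex (loops counted twice) *)
Definition valency (V H : finType) (vert : H -> V) (mu : V) : nat :=
  #|[set h | vert h == mu]|.

Definition truncated_at (V H : finType) (vert : H -> V) (m : V -> nat) (mu : V) : bool :=
  (valency vert mu == 1) && (m mu == 1).

(* (i, mu) in X_Delta, indexed by the half-edge (occurrence) h of i at mu *)
Definition in_X (V H : finType) (iota : H -> H) (vert : H -> V) (m : V -> nat) (h : H) : bool :=
  ~~ truncated_at vert m (vert h) && ~~ truncated_at vert m (vert (iota h)).

Definition quantizing (K : fieldType) (V H : finType) (iota : H -> H) (vert : H -> V)
  (m : V -> nat) (q : H -> K) : Prop :=
  forall h, in_X iota vert m h -> q h != 0%R.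

Definition omega (gT : finGroupType) (V H : finType) (vert : H -> V) (W : H -> gT)
  (mu : V) : gT := (\prod_(h | vert h == mu) W h)%g.

Definition brauer_weighting (gT : finGroupType) (V H : finType) (vert : H -> V)
  (m : V -> nat) (W : H -> gT) : Prop :=
  forall mu, (#[omega vert W mu]%g %| m mu)%N.

(* Generating steps of ~ on pairs (h, g) representing (h, H_mu g):
   (h, g) -> (sigma h, g W(h))  and  (h, g) -> (h, g omega_mu)  (coset identification). *)
Definition cov_step (gT : finGroupType) (V H : finType) (sigma : H -> H) (vert : H -> V)
  (W : H -> gT) : rel (H * gT) :=
  fun x y => (y == (sigma x.1, (x.2 * W x.1)%g)) ||
             (y == (x.1, (x.2 * omega vert W (vert x.1))%g)).

Definition cov_equiv (gT : finGroupType) (V H : finType) (sigma : H -> H) (vert : H -> V)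
  (W : H -> gT) : rel (H * gT) :=
  connect (fun x y => cov_step sigma vert W x y || cov_step sigma vert W y x).

(* (h,g) and (h',g') sit at the same vertex mu_d of Delta_W *)
Definition cov_same_vertex (gT : finGroupType) (V H : finType) (sigma : H -> H)
  (vert : H -> V) (W : H -> gT) (x y : H * gT) : bool :=
  (vert x.1 == vert y.1) && cov_equiv sigma vert W x y.

(* Delta_W has no loops: no edge i_g has both endpoints equal.  The edge i_g
   with half-edges h, iota h has endpoints vertex(h,g) and vertex(iota h,g). *)
Definition covering_loopless (gT : finGroupType) (V H : finType) (iota sigma : H -> H)
  (vert : H -> V) (W : H -> gT) : Prop :=
  forall (h : H) (g : gT), ~~ cov_same_vertex sigma vert W (h, g) (iota h, g).

From HB Require Import structures.
From mathcomp Require Import all_boot all_order all_algebra all_fingroup.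

Set Implicit Arguments. Unset Strict Implicit.

Import GRing.Theory FinRing.Theory.
Local Open Scope ring_scope.

(* Take G to be a finite cyclic group, written additively, that is
   large enough to carry an injective labelling P of the half-edges, and weight
   every successor pair (h, sigma h) by the coboundary W h = P (sigma h) - P h.
   - Since sigma permutes the half-edges at each vertex mu, omega_mu is a
     telescoping sum and vanishes; hence ord(mu) = 1 divides m(mu) and W is a
     Brauer weighting.
   - The quantity g - P h is unchanged by both generating steps of the
     relation ~ on pairs (h, g), hence is an invariant of ~.  If the edge i_g
     with half-edges h, iota h were a loop of Delta_W, then (h, g) ~ (iota h, g)
     and the invariant would give P h = P (iota h), contradicting injectivity
     of P because iota has no fixed points. *)

Lemma connect_invariant (T : finType) (e : rel T) (U : Type) (f : T -> U) :
  (forall x y, e x y -> f x = f y) -> forall x y, connect e x y -> f x = f y.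
Proof.
move=> f_inv x y /connectP [p e_p ->] {y}.
elim: p x e_p => [|z p IHp] x //= /andP [e_xz e_p].
by rewrite (f_inv _ _ e_xz) (IHp _ e_p).
Qed.

Section CoboundaryWeighting.

Variables (G : finZmodType) (V H : finType) (sigma : H -> H) (vert : H -> V).
Variable P : H -> G.

Definition coboundary (h : H) : G := P (sigma h) - P h.

Lemma omega_sumE (W : H -> G) (mu : V) :
  omega vert W mu = \sum_(h | vert h == mu) W h.
Proof. by []. Qed.

Hypothesis sigma_inj : injective sigma.
Hypothesis vert_sigma : forall h, vert (sigma h) = vert h.

(* Telescoping: sigma permutes the half-edges at mu, so omega_mu vanishes. *)
Lemma omega_coboundary (mu : V) : omega vert coboundary mu = 1%g.
Proof.
rewrite omega_sumE zmod1gE /coboundary sumrB.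
rewrite [X in _ - X](reindex_inj sigma_inj) /=.
rewrite [X in _ - X](eq_bigl (fun h => vert h == mu)) ?subrr // => h.
by rewrite vert_sigma.
Qed.

Lemma coboundary_brauer_weighting (m : V -> nat) :
  brauer_weighting vert m coboundary.
Proof. by move=> mu; rewrite omega_coboundary order1 dvd1n. Qed.

Lemma cov_equiv_label (x y : H * G) :
  cov_equiv sigma vert coboundary x y -> x.2 - P x.1 = y.2 - P y.1.
Proof.
have step_inv u v : cov_step sigma vert coboundary u v -> u.2 - P u.1 = v.2 - P v.1.
  case: u => h g /orP [] /eqP -> /=; rewrite zmodMgE.
    by rewrite /coboundary addrA addrAC addrK.
  by rewrite omega_coboundary zmod1gE addr0.
apply: (@connect_invariant _ _ _ (fun u : H * G => u.2 - P u.1)) => u v.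
by case/orP => /step_inv.
Qed.

Lemma coboundary_loopless (iota : H -> H) :
  injective P -> (forall h, iota h != h) ->
  covering_loopless iota sigma vert coboundary.
Proof.
move=> P_inj iota_nfix h g; apply/negP => /andP [_ /cov_equiv_label /=].
by move=> /addrI /oppr_inj /P_inj iota_h; move: (iota_nfix h); rewrite -iota_h eqxx.
Qed.

End CoboundaryWeighting.

Definition rank_label (H : finType) (h : H) : 'I_(#|H|).+1 := inord (enum_rank h).

Lemma rank_label_inj (H : finType) : injective (@rank_label H).
Proof.
have rank_lt (h : H) : (enum_rank h < (#|H|).+1)%N := ltnW (ltn_ord _).
move=> a b /(congr1 val); rewrite /rank_label /= !inordK //.
by move/val_inj/enum_rank_inj.
Qed.

Theorem proposition6p5 (V H : finType) (iota sigma : H -> H) (vert : H -> V)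
  (m : V -> nat) (K : fieldType) (q : H -> K) :
  brauer_graph iota sigma vert m ->
  quantizing iota vert m q ->
  exists (gT : finGroupType) (W : H -> gT),
    [/\ abelian [set: gT], brauer_weighting vert m W &
        covering_loopless iota sigma vert W].
Proof.
move=> [_ [iota_nfix [sigma_inj [vert_sigma _]]]] _.
exists ('I_(#|H|).+1 : finGroupType), (coboundary sigma (@rank_label H)); split.
- exact: zmod_abelian.
- exact: coboundary_brauer_weighting.
- exact: coboundary_loopless (@rank_label_inj H) iota_nfix.
Qed.
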